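(* Let $m,n$ be positive integers. The pseudograph $\mathcal{K}_{m,n}$ admits a nullhomotopic knight's tour if and only if neither of the following holds: (i) $m$ and $n$ are both odd and at least one of $m,n$ is greater than $1$; (ii) $m\le 2$, $n\le 2$, and at least one of $m,n$ is greater than $1$.
   Context: Let $\mathcal{P}$ be the graph with vertex set $\mathbb{Z}^2$ in which $(a,b)$ and $(a',b')$ are adjacent iff $\{|a-a'|,|b-b'|\}=\{1,2\}$. For positive integers $m,n$ let $G$ be the group of automorphisms of $\mathcal{P}$ generated by $\tau(a,b)=(a+m,b)$ and $\sigma(a,b)=(m-1-a,\,b+n)$; it acts freely, and the knight's pseudograph of the $m\times n$ Klein bottle board is the quotient $\mathcal{K}_{m,n}=\mathcal{P}/G$, whose vertices are orbits of vertices (represented by $(a,b)$ with $0\le a<m$, $0\le b<n$) and whose edges are orbits of edges (multiple edges and loops may occur). The quotient map $\phi_K:\mathcal{P}\to\mathcal{K}_{m,n}$ is a covering map. A knight's tour is a closed walk visiting every vertex exactly once apart from the repeated start/end vertex (a Hamiltonian cycle; for a single vertex the trivial walk counts). Regard a tour as a closed walk starting and ending at vertex $(0,0)$; it lifts uniquely to a walk in $\mathcal{P}$ starting at $(0,0)$. The tour is nullhomotopic if this lift ends at $(0,0)$ (equivalently, the corresponding closed curve on the Klein bottle is contractible). *)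

From Stdlib Require Import ZArith Lia.
Open Scope Z_scope.

Definition pt := (Z * Z)%type.

Definition knight_adj (p q : pt) : Prop :=
  let da := Z.abs (fst p - fst q) in
  let db := Z.abs (snd p - snd q) in
  (da = 1 /\ db = 2) \/ (da = 2 /\ db = 1).

Definition tau (m n : Z) (p : pt) : pt := (fst p + m, snd p).
Definition tau_inv (m n : Z) (p : pt) : pt := (fst p - m, snd p).
Definition sigma (m n : Z) (p : pt) : pt := (m - 1 - fst p, snd p + n).
Definition sigma_inv (m n : Z) (p : pt) : pt := (m - 1 - fst p, snd p - n).

Inductive inG (m n : Z) : (pt -> pt) -> Prop :=
| inG_id : inG m n (fun p => p)
| inG_tau f : inG m n f -> inG m n (fun p => tau m n (f p))
| inG_tau_inv f : inG m n f -> inG m n (fun p => tau_inv m n (f p))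
| inG_sigma f : inG m n f -> inG m n (fun p => sigma m n (f p))
| inG_sigma_inv f : inG m n f -> inG m n (fun p => sigma_inv m n (f p)).

(** Two vertices of P have the same image in K_{m,n} (same G-orbit). *)
Definition same_vertex (m n : Z) (p q : pt) : Prop :=
  exists g, inG m n g /\ g p = q.

(** The edges {p,q} and {p',q'} of P have the same image in K_{m,n}
    (edges of K_{m,n} are G-orbits of (unordered) edges of P). *)
Definition same_edge (m n : Z) (p q p' q' : pt) : Prop :=
  exists g, inG m n g /\
    ((g p = p' /\ g q = q') \/ (g p = q' /\ g q = p')).

(** [tour_lift m n k w]: w 0, ..., w k is the lift to P (starting at (0,0))
    of a knight's tour of K_{m,n} of length k, i.e. of a Hamiltonian cycle
    v_0 e_1 v_1 ... e_k v_k = v_0 with v_i = phi(w i), e_i = phi({w (i-1), w i}):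
    - it starts at (0,0), consecutive points are knight-adjacent in P;
    - the edges used in K_{m,n} are pairwise distinct;
    - the vertices v_0,...,v_k are pairwise distinct except v_0 = v_k;
    - every vertex of K_{m,n} is visited.
    For k = 0 this is the trivial walk (a tour iff K_{m,n} has one vertex). *)
Definition tour_lift (m n : Z) (k : nat) (w : nat -> pt) : Prop :=
  w 0%nat = (0, 0) /\
  same_vertex m n (w 0%nat) (w k) /\
  (forall i : nat, (i < k)%nat -> knight_adj (w i) (w (S i))) /\
  (forall i j : nat, (i < j < k)%nat ->
       ~ same_edge m n (w i) (w (S i)) (w j) (w (S j))) /\
  (forall i j : nat, (i < j <= k)%nat ->
       same_vertex m n (w i) (w j) -> i = 0%nat /\ j = k) /\
  (forall p : pt, exists i : nat, (i <= k)%nat /\ same_vertex m n (w i) p).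

(** K_{m,n} admits a nullhomotopic knight's tour: some tour whose lift
    starting at (0,0) ends at (0,0). *)
Definition has_nullhomotopic_tour (m n : Z) : Prop :=
  exists (k : nat) (w : nat -> pt), tour_lift m n k w /\ w k = (0, 0).

From Stdlib Require Import ZArith Lia List Bool.
Import ListNotations.
Open Scope Z_scope.

(* A knight move changes the parity of a + b, so the lift of a closed walk returning to
   (0,0) has even length; a tour has m * n steps, hence m * n is even.  On 1 x 2 and 2 x 1
   a tour of length 2 uses its edge twice, and on 2 x 2 the closed knight walks of length
   4 are enumerated.

   Conversely, a knight cycle in the plane through (0,0) with m * n vertices meeting every
   G-orbit is the lift of a nullhomotopic tour.  The board is the cylinder Z/m x [0,n),
   and for m = 2M also the cylinder Z/2n x [0,M) (sigma glues the two halves), so it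
   suffices to find Hamiltonian cycles of cylinders that close up in the plane.  These are
   obtained by splicing two helices that wind once around the cylinder in the same
   direction, the second one traversed backwards so that the windings cancel.  A direct
   construction handles n = 2 with m odd, and the finitely many remaining boards are
   checked by computation. *)

(** * The orbits of G *)

Lemma inG_comp m n f g : inG m n f -> inG m n g -> inG m n (fun p => g (f p)).
Proof.
  intros Hf Hg.
  induction Hg; [exact Hf | apply inG_tau | apply inG_tau_inv | apply inG_sigma
                 | apply inG_sigma_inv]; assumption.
Qed.

Lemma same_vertex_refl m n p : same_vertex m n p p.
Proof. exists (fun q => q). split; [constructor | reflexivity]. Qed.

Lemma same_vertex_trans m n p q r :
  same_vertex m n p q -> same_vertex m n q r -> same_vertex m n p r.
Proof.
  intros [f [Hf <-]] [g [Hg <-]].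
  exists (fun x => g (f x)). split; [apply inG_comp |]; auto.
Qed.

Lemma same_vertex_generators m n p q : same_vertex m n p q ->
  same_vertex m n p (tau m n q) /\ same_vertex m n p (tau_inv m n q) /\
  same_vertex m n p (sigma m n q) /\ same_vertex m n p (sigma_inv m n q).
Proof.
  intros [g [Hg <-]]. repeat split.
  - exists (fun x => tau m n (g x)). split; [apply inG_tau |]; auto.
  - exists (fun x => tau_inv m n (g x)). split; [apply inG_tau_inv |]; auto.
  - exists (fun x => sigma m n (g x)). split; [apply inG_sigma |]; auto.
  - exists (fun x => sigma_inv m n (g x)). split; [apply inG_sigma_inv |]; auto.
Qed.

(* [glide m n t k] is the element tau^t sigma^k of G. *)
Definition glide (m n t k : Z) (p : pt) : pt :=
  (if Z.even k then fst p + m * t else m - 1 - fst p + m * t, snd p + n * k).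

Lemma glide_even m n t z p : glide m n t (2 * z) p = (fst p + m * t, snd p + n * (2 * z)).
Proof. unfold glide. now rewrite Z.even_mul. Qed.

Lemma glide_odd m n t z p :
  glide m n t (2 * z + 1) p = (m - 1 - fst p + m * t, snd p + n * (2 * z + 1)).
Proof. unfold glide. now rewrite Z.even_odd. Qed.

Lemma same_vertex_glide m n t k p : same_vertex m n p (glide m n t k p).
Proof.
  revert t. induction k as [| k IHk | k IHk] using Z.peano_ind; intro t.
  - induction t as [| t IHt | t IHt] using Z.peano_ind.
    + replace (glide m n 0 0 p) with p by (unfold glide; destruct p; cbn; f_equal; lia).
      apply same_vertex_refl.
    + replace (glide m n (Z.succ t) 0 p) with (tau m n (glide m n t 0 p))
        by (unfold glide, tau; cbn; f_equal; lia).
      apply same_vertex_generators, IHt.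
    + replace (glide m n (Z.pred t) 0 p) with (tau_inv m n (glide m n t 0 p))
        by (unfold glide, tau_inv; cbn; f_equal; lia).
      apply same_vertex_generators, IHt.
  - replace (glide m n t (Z.succ k) p) with (sigma m n (glide m n (- t) k p)).
    + apply same_vertex_generators, IHk.
    + unfold glide, sigma. rewrite Z.even_succ, <- Z.negb_even.
      destruct (Z.even k); cbn; f_equal; lia.
  - replace (glide m n t (Z.pred k) p) with (sigma_inv m n (glide m n (- t) k p)).
    + apply same_vertex_generators, IHk.
    + unfold glide, sigma_inv. rewrite Z.even_pred, <- Z.negb_even.
      destruct (Z.even k); cbn; f_equal; lia.
Qed.

Lemma glide_inv m n t k p :
  glide m n (if Z.even k then - t else t) (- k) (glide m n t k p) = p.
Proof.
  unfold glide. rewrite Z.even_opp. destruct p as [a b].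
  destruct (Z.even k); cbn; f_equal; lia.
Qed.

Lemma same_vertex_glide_inv m n t k p : same_vertex m n (glide m n t k p) p.
Proof.
  rewrite <- (glide_inv m n t k p) at 2. apply same_vertex_glide.
Qed.

(* The representative of the orbit of [p] in the fundamental domain [0,m) x [0,n). *)
Definition canon (m n : Z) (p : pt) : pt :=
  (if Z.even (snd p / n) then fst p mod m else (m - 1 - fst p) mod m, snd p mod n).

Lemma canon_generators m n p : 0 < m -> 0 < n ->
  canon m n (tau m n p) = canon m n p /\ canon m n (tau_inv m n p) = canon m n p /\
  canon m n (sigma m n p) = canon m n p /\ canon m n (sigma_inv m n p) = canon m n p.
Proof.
  intros Hm Hn. destruct p as [a b].
  unfold canon, tau, tau_inv, sigma, sigma_inv; cbn.
  replace (b + n) with (b + 1 * n) by lia. replace (b - n) with (b + (-1) * n) by lia.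
  rewrite !Z_div_plus_full, !Z_mod_plus_full, !Z.even_add by lia. cbn.
  replace (a + m) with (a + 1 * m) by lia. replace (a - m) with (a + (-1) * m) by lia.
  replace (m - 1 - (a + 1 * m)) with (m - 1 - a + (-1) * m) by lia.
  replace (m - 1 - (a + -1 * m)) with (m - 1 - a + 1 * m) by lia.
  replace (m - 1 - (m - 1 - a)) with a by lia.
  rewrite !Z_mod_plus_full.
  repeat split; destruct (Z.even (b / n)); reflexivity.
Qed.

Lemma canon_inG m n g p : 0 < m -> 0 < n -> inG m n g -> canon m n (g p) = canon m n p.
Proof.
  intros Hm Hn Hg. induction Hg as [| f _ IH | f _ IH | f _ IH | f _ IH]; [reflexivity | ..];
    rewrite <- IH; apply (canon_generators m n (f p) Hm Hn).
Qed.

Lemma canon_as_glide m n p : 0 < m -> 0 < n -> exists t k, canon m n p = glide m n t k p.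
Proof.
  intros Hm Hn. destruct p as [a b]. unfold canon, glide; cbn.
  pose proof (Z.div_mod b n ltac:(lia)).
  pose proof (Z.div_mod a m ltac:(lia)).
  pose proof (Z.div_mod (m - 1 - a) m ltac:(lia)).
  destruct (Z.even (b / n)) eqn:Hk.
  - exists (- (a / m)), (- (b / n)). rewrite Z.even_opp, Hk. f_equal; lia.
  - exists (- ((m - 1 - a) / m)), (- (b / n)). rewrite Z.even_opp, Hk. f_equal; lia.
Qed.

Lemma same_vertex_iff_canon m n p q : 0 < m -> 0 < n ->
  same_vertex m n p q <-> canon m n p = canon m n q.
Proof.
  intros Hm Hn. split.
  - intros [g [Hg <-]]. symmetry. apply canon_inG; assumption.
  - intros E.
    destruct (canon_as_glide m n p Hm Hn) as [t [k Ep]].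
    destruct (canon_as_glide m n q Hm Hn) as [t' [k' Eq]].
    apply same_vertex_trans with (canon m n p); [rewrite Ep; apply same_vertex_glide |].
    rewrite E, Eq. apply same_vertex_glide_inv.
Qed.

Lemma canon_glide m n t k p : 0 < m -> 0 < n -> canon m n (glide m n t k p) = canon m n p.
Proof.
  intros Hm Hn. symmetry. apply same_vertex_iff_canon, same_vertex_glide; assumption.
Qed.

Lemma canon_small m n x y : 0 <= x < m -> 0 <= y < n -> canon m n (x, y) = (x, y).
Proof.
  intros Hx Hy. unfold canon; cbn. rewrite Z.div_small by lia. cbn.
  rewrite !Z.mod_small by lia. reflexivity.
Qed.

Lemma canon_bounds m n p : 0 < m -> 0 < n ->
  0 <= fst (canon m n p) < m /\ 0 <= snd (canon m n p) < n.
Proof.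
  intros Hm Hn. unfold canon; cbn.
  split; [destruct (Z.even _) |]; apply Z.mod_pos_bound; lia.
Qed.

Lemma canon_of_glide m n t k x y q : 0 <= x < m -> 0 <= y < n ->
  q = glide m n t k (x, y) -> canon m n q = (x, y).
Proof.
  intros Hx Hy ->. rewrite canon_glide by lia. apply canon_small; assumption.
Qed.

(** * Points, boards and knight walks *)

Definition pt_add (p q : pt) : pt := (fst p + fst q, snd p + snd q).
Definition pt_sub (p q : pt) : pt := (fst p - fst q, snd p - snd q).

Definition pt_eqb (p q : pt) : bool := (fst p =? fst q) && (snd p =? snd q).

Lemma pt_eqb_eq p q : pt_eqb p q = true <-> p = q.
Proof.
  destruct p, q. unfold pt_eqb; cbn. rewrite andb_true_iff, !Z.eqb_eq.
  split; [intros [-> ->] | intros E; inversion E]; auto.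
Qed.

Definition knight_adjb (p q : pt) : bool :=
  let da := Z.abs (fst p - fst q) in
  let db := Z.abs (snd p - snd q) in
  ((da =? 1) && (db =? 2)) || ((da =? 2) && (db =? 1)).

Lemma knight_adjb_spec p q : knight_adjb p q = true <-> knight_adj p q.
Proof.
  unfold knight_adjb, knight_adj.
  rewrite orb_true_iff, !andb_true_iff, !Z.eqb_eq. reflexivity.
Qed.

Lemma knight_adj_sym p q : knight_adj p q -> knight_adj q p.
Proof. unfold knight_adj. lia. Qed.

Definition range (k : Z) : list Z := map Z.of_nat (seq 0 (Z.to_nat k)).

Lemma in_range k x : In x (range k) <-> 0 <= x < k.
Proof.
  unfold range. rewrite in_map_iff. split.
  - intros [i [<- Hi]]. apply in_seq in Hi. lia.
  - intros H. exists (Z.to_nat x). rewrite in_seq. split; lia.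
Qed.

Lemma range_NoDup k : NoDup (range k).
Proof.
  apply NoDup_map_NoDup_ForallPairs; [intros a b _ _ E; lia | apply seq_NoDup].
Qed.

Lemma NoDup_list_prod {A B : Type} (l : list A) (l' : list B) :
  NoDup l -> NoDup l' -> NoDup (list_prod l l').
Proof.
  intros Hl Hl'. induction Hl as [| a l Ha _ IH]; cbn; [constructor |].
  apply NoDup_app; auto.
  - apply NoDup_map_NoDup_ForallPairs; auto. intros x y _ _ E. congruence.
  - intros [x y] H1 H2. apply in_map_iff in H1 as [z [E _]]. inversion E; subst.
    apply in_prod_iff in H2. tauto.
Qed.

Definition board (m n : Z) : list pt := list_prod (range m) (range n).

Lemma in_board m n x y : In (x, y) (board m n) <-> 0 <= x < m /\ 0 <= y < n.
Proof. unfold board. rewrite in_prod_iff, !in_range. reflexivity. Qed.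

Lemma board_NoDup m n : NoDup (board m n).
Proof. apply NoDup_list_prod; apply range_NoDup. Qed.

Lemma board_length m n : 0 <= m -> 0 <= n -> Z.of_nat (length (board m n)) = m * n.
Proof.
  intros. unfold board, range, pt. rewrite length_prod, !length_map, !length_seq. lia.
Qed.

Section ListEnds.
Context {A : Type}.
Implicit Types (l : list A) (d : A).

Lemma hd_app_ne l1 l2 d : l1 <> [] -> hd d (l1 ++ l2) = hd d l1.
Proof. destruct l1; [congruence | reflexivity]. Qed.

Lemma last_app_ne l1 l2 d : l2 <> [] -> last (l1 ++ l2) d = last l2 d.
Proof.
  intros H. induction l1 as [| x l1 IH]; [reflexivity |].
  rewrite <- app_comm_cons, <- IH. cbn.
  destruct (l1 ++ l2) eqn:E; [apply app_eq_nil in E; tauto | reflexivity].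
Qed.

Lemma last_cons_ne x l d : l <> [] -> last (x :: l) d = last l d.
Proof. destruct l; [congruence | reflexivity]. Qed.

Lemma rev_ne l : l <> [] -> rev l <> [].
Proof. intros H E. apply H, rev_inj. exact E. Qed.

Lemma hd_rev_ne l d : l <> [] -> hd d (rev l) = last l d.
Proof.
  intros H. induction l as [| x l IH]; [congruence |].
  destruct l as [| y l]; [reflexivity |].
  rewrite last_cons_ne by discriminate.
  change (rev (x :: y :: l)) with (rev (y :: l) ++ [x]).
  rewrite hd_app_ne; [apply IH; discriminate | apply rev_ne; discriminate].
Qed.

Lemma last_rev_ne l d : l <> [] -> last (rev l) d = hd d l.
Proof. destruct l as [| x l]; [congruence |]. intros _. apply last_last. Qed.

Lemma nth_pred_length l d : l <> [] -> nth (length l - 1) l d = last l d.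
Proof.
  intros H. induction l as [| x l IH]; [congruence |].
  destruct l as [| y l]; [reflexivity |].
  rewrite last_cons_ne, <- IH by discriminate. cbn. rewrite Nat.sub_0_r. reflexivity.
Qed.

Lemma map_ne {B : Type} (f : A -> B) l : l <> [] -> map f l <> [].
Proof. destruct l; [congruence | discriminate]. Qed.

Lemma app_ne_r l1 l2 : l2 <> [] -> l1 ++ l2 <> [].
Proof. intros H E. apply app_eq_nil in E. tauto. Qed.

Lemma hd_map_ne {B : Type} (f : A -> B) l d (d' : B) : l <> [] -> hd d' (map f l) = f (hd d l).
Proof. destruct l; [congruence | reflexivity]. Qed.

Lemma last_map_ne {B : Type} (f : A -> B) l d (d' : B) :
  l <> [] -> last (map f l) d' = f (last l d).
Proof.
  intros H. induction l as [| x l IH]; [congruence |].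
  destruct l as [| y l]; [reflexivity |].
  cbn [map]. rewrite !last_cons_ne by discriminate. apply IH. discriminate.
Qed.

End ListEnds.

Fixpoint knight_walk (L : list pt) : Prop :=
  match L with
  | p :: ((q :: _) as L') => knight_adj p q /\ knight_walk L'
  | _ => True
  end.

Definition knight_cycle (L : list pt) : Prop :=
  L <> [] /\ knight_walk L /\ knight_adj (last L (0, 0)) (hd (0, 0) L).

Fixpoint knight_walkb (L : list pt) : bool :=
  match L with
  | p :: ((q :: _) as L') => knight_adjb p q && knight_walkb L'
  | _ => true
  end.

Lemma knight_walkb_spec L : knight_walkb L = true -> knight_walk L.
Proof.
  induction L as [| p L IH]; [intros _; exact I |]. destruct L as [| q L']; [intros _; exact I |].
  cbn [knight_walkb]. rewrite andb_true_iff, knight_adjb_spec. intros [Hpq HL]. split; auto.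
Qed.

Ltac solve_knight_adj :=
  intros; unfold knight_adj, pt_add; cbn [fst snd hd last map seq];
  rewrite ?Nat2Z.inj_succ; lia.

Lemma knight_walk_nth L i d : knight_walk L -> (S i < length L)%nat ->
  knight_adj (nth i L d) (nth (S i) L d).
Proof.
  revert i. induction L as [| x L IH]; intros i HL Hi; [cbn in Hi; lia |].
  destruct L as [| y L]; [cbn in Hi; lia |]. destruct HL as [Hxy HL].
  destruct i; [exact Hxy |]. apply (IH i HL). cbn in *. lia.
Qed.

Lemma knight_walk_app L1 L2 : L1 <> [] -> L2 <> [] ->
  knight_walk (L1 ++ L2) <->
  knight_walk L1 /\ knight_walk L2 /\ knight_adj (last L1 (0, 0)) (hd (0, 0) L2).
Proof.
  intros H1 H2. induction L1 as [| x L1 IH]; [congruence |].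
  destruct L1 as [| y L1].
  - destruct L2 as [| z L2]; [congruence |]. cbn. tauto.
  - rewrite last_cons_ne by discriminate. cbn [app knight_walk] in *.
    specialize (IH ltac:(discriminate)). tauto.
Qed.

Lemma knight_walk_rev L : knight_walk L -> knight_walk (rev L).
Proof.
  induction L as [| x L IH]; [trivial |]. intros HL.
  destruct L as [| y L]; [exact I |]. destruct HL as [Hxy HL].
  change (rev (x :: y :: L)) with (rev (y :: L) ++ [x]).
  apply knight_walk_app; [apply rev_ne; discriminate | discriminate |].
  rewrite last_rev_ne by discriminate.
  repeat split; [apply IH, HL | apply knight_adj_sym, Hxy].
Qed.

Lemma knight_walk_map f L : (forall p q, knight_adj p q -> knight_adj (f p) (f q)) ->
  knight_walk L -> knight_walk (map f L).
Proof.
  intros Hf. induction L as [| x L IH]; [trivial |].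
  destruct L as [| y L]; [trivial |]. intros [Hxy HL]. split; [apply Hf, Hxy | apply IH, HL].
Qed.

Lemma knight_walk_map_seq (f : nat -> pt) a k :
  (forall i, knight_adj (f i) (f (S i))) -> knight_walk (map f (seq a k)).
Proof.
  intros Hf. revert a. induction k as [| k IH]; intro a; [exact I |].
  destruct k; [exact I |]. split; [apply Hf | apply (IH (S a))].
Qed.

Lemma last_map_seq {A : Type} (f : nat -> A) a k d : last (map f (seq a (S k))) d = f (a + k)%nat.
Proof.
  revert a. induction k as [| k IH]; intro a; [cbn; f_equal; lia |].
  rewrite <- (Nat.add_succ_comm a k), <- IH. reflexivity.
Qed.

Lemma knight_cycle_rotate U V : knight_cycle (U ++ V) -> V <> [] -> knight_cycle (V ++ U).
Proof.
  intros [_ [HW Hcl]] HV. destruct U as [| u U]; [rewrite app_nil_r; split; auto |].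
  assert (HU : u :: U <> []) by discriminate.
  rewrite last_app_ne, hd_app_ne in Hcl by assumption.
  apply knight_walk_app in HW as [HWU [HWV Hj]]; [| assumption ..].
  split; [apply app_ne_r; assumption |].
  rewrite hd_app_ne, last_app_ne by assumption.
  split; [apply knight_walk_app |]; auto.
Qed.

Lemma knight_cycle_map f L : (forall p q, knight_adj p q -> knight_adj (f p) (f q)) ->
  knight_cycle L -> knight_cycle (map f L).
Proof.
  intros Hf [HL [HW Hcl]]. split; [apply map_ne, HL |]. split; [apply knight_walk_map; auto |].
  rewrite (last_map_ne _ _ (0, 0)), (hd_map_ne _ _ (0, 0)) by assumption. apply Hf, Hcl.
Qed.

(** * Tours from knight cycles in the plane *)

Lemma tour_lift_of_injective m n k w : 0 < m -> 0 < n -> (3 <= k)%nat ->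
  w 0%nat = (0, 0) -> w k = (0, 0) ->
  (forall i, (i < k)%nat -> knight_adj (w i) (w (S i))) ->
  (forall i j, (i < k)%nat -> (j < k)%nat -> canon m n (w i) = canon m n (w j) -> i = j) ->
  (forall p, exists i, (i < k)%nat /\ canon m n (w i) = canon m n p) ->
  tour_lift m n k w.
Proof.
  intros Hm Hn Hk Hw0 Hwk Hadj Hinj Hsurj.
  assert (Hsv : forall i j, same_vertex m n (w i) (w j) <-> canon m n (w i) = canon m n (w j))
    by (intros; apply same_vertex_iff_canon; assumption).
  assert (Hwrap : canon m n (w k) = canon m n (w 0%nat)) by congruence.
  split; [exact Hw0 |]. split; [apply Hsv; congruence |]. split; [exact Hadj |]. split.
  - intros i j [Hij Hjk] [g [Hg Hcase]].
    assert (Hc : forall p, canon m n (g p) = canon m n p) by (intro; apply canon_inG; auto).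
    destruct Hcase as [[E1 _] | [E1 E2]].
    + assert (i = j) by (apply Hinj; [lia | lia | now rewrite <- E1, Hc]). lia.
    + (* a reversed edge forces [w i ~ w (i+2)], impossible as [k >= 3] *)
      assert (S i = j) by (apply Hinj; [lia | lia | now rewrite <- E2, Hc]). subst j.
      assert (Hii : canon m n (w i) = canon m n (w (S (S i)))) by now rewrite <- E1, Hc.
      destruct (Nat.eq_dec (S (S i)) k) as [Ek | Ek].
      * rewrite Ek, Hwrap in Hii.
        assert (i = 0%nat) by (apply Hinj; [lia | lia | exact Hii]). lia.
      * assert (i = S (S i)) by (apply Hinj; [lia | lia | exact Hii]). lia.
  - split.
    + intros i j [Hij Hjk] Hij'. apply Hsv in Hij'.
      destruct (Nat.eq_dec j k) as [-> | Ej].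
      * split; [apply Hinj; try lia; congruence | reflexivity].
      * assert (i = j) by (apply Hinj; auto; lia). lia.
    + intros p. destruct (Hsurj p) as [i [Hi E]].
      exists i. split; [lia | apply same_vertex_iff_canon; assumption].
Qed.

(* By pigeonhole, a cycle with [m * n] vertices meeting every orbit meets each one once. *)
Lemma tour_of_knight_cycle m n L : 0 < m -> 0 < n -> 3 <= m * n ->
  knight_cycle L -> hd (0, 0) L = (0, 0) -> Z.of_nat (length L) = m * n ->
  incl (board m n) (map (canon m n) L) -> has_nullhomotopic_tour m n.
Proof.
  intros Hm Hn H3 [HL [HW Hcl]] Hhd Hlen Hcov.
  set (w i := nth i L (0, 0)).
  assert (Hlast : w (length L - 1)%nat = last L (0, 0)) by apply nth_pred_length, HL.
  assert (HND : NoDup (map (canon m n) L)).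
  { apply (NoDup_incl_NoDup (board_NoDup m n)); [| exact Hcov].
    rewrite length_map. pose proof (board_length m n ltac:(lia) ltac:(lia)). lia. }
  exists (length L), w. split; [| apply nth_overflow; lia].
  refine (tour_lift_of_injective m n _ w Hm Hn _ _ _ _ _ _).
  - lia.
  - now destruct L.
  - apply nth_overflow; lia.
  - intros i Hi. destruct (Nat.eq_dec (S i) (length L)) as [E | E].
    + rewrite E. replace i with (length L - 1)%nat by lia. rewrite Hlast.
      unfold w. rewrite nth_overflow by lia. rewrite Hhd in Hcl. exact Hcl.
    + apply knight_walk_nth; [exact HW | lia].
  - intros i j Hi Hj E. apply (proj1 (NoDup_nth _ (canon m n (0, 0))) HND);
      rewrite ?length_map; try assumption.
    rewrite !map_nth. exact E.
  - intros p. destruct (canon_bounds m n p Hm Hn) as [Hx Hy].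
    pose proof (proj2 (in_board m n _ _) (conj Hx Hy)) as Hp.
    apply Hcov, (In_nth _ _ (canon m n (0, 0))) in Hp as [i [Hi E]]. rewrite length_map in Hi.
    exists i. split; [exact Hi |]. unfold w. rewrite <- map_nth, E.
    symmetry. apply surjective_pairing.
Qed.

(** * Necessity *)

Lemma knight_adj_parity p q : knight_adj p q ->
  Z.even (fst q + snd q) = negb (Z.even (fst p + snd p)).
Proof.
  unfold knight_adj. intros H.
  replace (fst q + snd q) with (fst p + snd p + (fst q + snd q - (fst p + snd p))) by lia.
  assert (Hd : let d := fst q + snd q - (fst p + snd p) in d = 1 \/ d = -1 \/ d = 3 \/ d = -3)
    by (cbn zeta; lia).
  rewrite Z.even_add.
  destruct Hd as [-> | [-> | [-> | ->]]]; destruct (Z.even (fst p + snd p)); reflexivity.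
Qed.

Lemma tour_lift_parity m n k w : tour_lift m n k w -> forall i, (i <= k)%nat ->
  Z.even (fst (w i) + snd (w i)) = Z.even (Z.of_nat i).
Proof.
  intros [Hw0 [_ [Hadj _]]] i. induction i as [| i IH]; intros Hi; [now rewrite Hw0 |].
  rewrite (knight_adj_parity (w i) (w (S i))), IH by (try apply Hadj; lia).
  rewrite Nat2Z.inj_succ, Z.even_succ, Z.negb_even. reflexivity.
Qed.

Lemma tour_lift_length m n k w : 0 < m -> 0 < n -> tour_lift m n k w -> (1 <= k)%nat ->
  Z.of_nat k = m * n.
Proof.
  intros Hm Hn [_ [Hwk [_ [_ [Hdist Hcov]]]]] Hk.
  set (C := map (fun i => canon m n (w i)) (seq 0 k)).
  assert (HC : NoDup C).
  { apply NoDup_map_NoDup_ForallPairs; [| apply seq_NoDup].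
    intros i j Hi Hj E. apply in_seq in Hi, Hj.
    destruct (Nat.lt_total i j) as [Hij | [Hij | Hij]]; [| exact Hij |];
      [ apply (same_vertex_iff_canon m n (w i) (w j) Hm Hn) in E
      | symmetry in E; apply (same_vertex_iff_canon m n (w j) (w i) Hm Hn) in E ];
      apply Hdist in E; lia. }
  assert (Hsub : incl C (board m n)).
  { intros c Hc. apply in_map_iff in Hc as [i [<- _]].
    rewrite (surjective_pairing (canon _ _ _)). apply in_board, canon_bounds; assumption. }
  assert (Hsup : incl (board m n) C).
  { intros [x y] Hxy. apply in_board in Hxy as [Hx Hy].
    destruct (Hcov (x, y)) as [i [Hi Hs]].
    assert (Hs' : canon m n (w (i mod k)%nat) = (x, y)).
    { rewrite <- (canon_small m n x y Hx Hy). apply same_vertex_iff_canon; [assumption .. |].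
      destruct (Nat.eq_dec i k) as [-> | Hik].
      - rewrite Nat.Div0.mod_same. apply (same_vertex_trans _ _ _ (w k)); assumption.
      - rewrite Nat.mod_small by lia. assumption. }
    rewrite <- Hs'. apply (in_map (fun i => canon m n (w i))), in_seq.
    pose proof (Nat.mod_upper_bound i k). lia. }
  pose proof (NoDup_incl_length HC Hsub). pose proof (NoDup_incl_length (board_NoDup m n) Hsup).
  pose proof (board_length m n ltac:(lia) ltac:(lia)).
  unfold C in *. rewrite length_map, length_seq in *. lia.
Qed.

Lemma tour_lift_trivial m n w : 0 < m -> 0 < n -> tour_lift m n 0 w -> m = 1 /\ n = 1.
Proof.
  intros Hm Hn [_ [_ [_ [_ [_ Hcov]]]]].
  assert (Hall : forall x y, 0 <= x < m -> 0 <= y < n -> (x, y) = canon m n (w 0%nat)).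
  { intros x y Hx Hy. destruct (Hcov (x, y)) as [i [Hi Hs]].
    replace i with 0%nat in Hs by lia.
    apply (same_vertex_iff_canon m n _ _ Hm Hn) in Hs. rewrite Hs. symmetry.
    apply canon_small; assumption. }
  destruct (Z_lt_ge_dec 1 m) as [H1 | H1].
  { pose proof (Hall 1 0 ltac:(lia) ltac:(lia)) as E.
    rewrite <- (Hall 0 0 ltac:(lia) ltac:(lia)) in E. discriminate. }
  destruct (Z_lt_ge_dec 1 n) as [H2 | H2].
  { pose proof (Hall 0 1 ltac:(lia) ltac:(lia)) as E.
    rewrite <- (Hall 0 0 ltac:(lia) ltac:(lia)) in E. discriminate. }
  lia.
Qed.

Lemma no_nullhomotopic_tour_lift_2 m n w : tour_lift m n 2 w -> w 2%nat = (0, 0) -> False.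
Proof.
  intros [Hw0 [_ [_ [Hedge _]]]] Hw2.
  apply (Hedge 0 1)%nat; [lia |]. exists (fun p => p).
  split; [constructor | right; split; congruence].
Qed.

Definition knight_moves : list pt :=
  [(1, 2); (2, 1); (-1, 2); (-2, 1); (1, -2); (2, -1); (-1, -2); (-2, -1)].

Lemma knight_adj_moves p q : knight_adj p q -> In (pt_sub q p) knight_moves.
Proof.
  unfold knight_adj, pt_sub. intros H.
  assert (Hc : (fst q - fst p = 1 \/ fst q - fst p = -1) /\
               (snd q - snd p = 2 \/ snd q - snd p = -2) \/
               (fst q - fst p = 2 \/ fst q - fst p = -2) /\
               (snd q - snd p = 1 \/ snd q - snd p = -1)) by lia.
  destruct Hc as [[[-> | ->] [-> | ->]] | [[-> | ->] [-> | ->]]]; cbn; tauto.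
Qed.

Definition distinct4b (a b c d : pt) : bool :=
  negb (pt_eqb a b || pt_eqb a c || pt_eqb a d || pt_eqb b c || pt_eqb b d || pt_eqb c d).

(* Every closed knight walk of length 4 from (0,0) visits some orbit of K_{2,2} twice. *)
Lemma no_closed_walk4_2x2 : forallb (fun d1 => forallb (fun d2 => forallb (fun d3 =>
    let p1 := pt_add (0, 0) d1 in let p2 := pt_add p1 d2 in let p3 := pt_add p2 d3 in
    implb (knight_adjb p3 (0, 0))
      (negb (distinct4b (canon 2 2 (0, 0)) (canon 2 2 p1) (canon 2 2 p2) (canon 2 2 p3))))
    knight_moves) knight_moves) knight_moves = true.
Proof. vm_compute. reflexivity. Qed.

Lemma pt_add_sub p q : pt_add p (pt_sub q p) = q.
Proof. destruct p, q. unfold pt_add, pt_sub; cbn. f_equal; lia. Qed.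

Lemma no_nullhomotopic_tour_lift_2x2 w : tour_lift 2 2 4 w -> w 4%nat = (0, 0) -> False.
Proof.
  intros Ht Hw4. pose proof Ht as [Hw0 [_ [Hadj [_ [Hdist _]]]]].
  assert (Hd : forall i j, (i < j < 4)%nat -> pt_eqb (canon 2 2 (w i)) (canon 2 2 (w j)) = false).
  { intros i j Hij. apply not_true_iff_false. rewrite pt_eqb_eq.
    intros E. apply (same_vertex_iff_canon 2 2) in E; [| lia ..].
    apply Hdist in E; lia. }
  pose proof no_closed_walk4_2x2 as T.
  rewrite forallb_forall in T. specialize (T _ (knight_adj_moves _ _ (Hadj 0%nat ltac:(lia)))).
  rewrite forallb_forall in T. specialize (T _ (knight_adj_moves _ _ (Hadj 1%nat ltac:(lia)))).
  rewrite forallb_forall in T. specialize (T _ (knight_adj_moves _ _ (Hadj 2%nat ltac:(lia)))).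
  assert (H30 : knight_adjb (w 3%nat) (w 0%nat) = true)
    by (apply knight_adjb_spec; rewrite Hw0, <- Hw4; apply Hadj; lia).
  cbv zeta in T. rewrite <- Hw0, !pt_add_sub, H30 in T. unfold distinct4b in T.
  rewrite (Hd 0 1)%nat, (Hd 0 2)%nat, (Hd 0 3)%nat, (Hd 1 2)%nat, (Hd 1 3)%nat, (Hd 2 3)%nat in T
    by lia.
  discriminate.
Qed.

Theorem nullhomotopic_tour_necessary m n : 0 < m -> 0 < n -> has_nullhomotopic_tour m n ->
  ~ ( (Z.odd m = true /\ Z.odd n = true /\ (1 < m \/ 1 < n)) \/
      (m <= 2 /\ n <= 2 /\ (1 < m \/ 1 < n)) ).
Proof.
  intros Hm Hn [k [w [Ht Hwk]]] Hex.
  destruct (Nat.eq_dec k 0) as [-> | Hk].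
  { destruct (tour_lift_trivial m n w Hm Hn Ht). lia. }
  pose proof (tour_lift_length m n k w Hm Hn Ht ltac:(lia)) as Hlen.
  pose proof (tour_lift_parity m n k w Ht k (le_n k)) as Hpar.
  rewrite Hwk, Hlen in Hpar. cbn in Hpar.
  destruct Hex as [[Hmo [Hno _]] | [Hm2 [Hn2 H1]]].
  - rewrite Z.even_mul, <- !Z.negb_odd, Hmo, Hno in Hpar. discriminate.
  - assert (Hmn : m * n = 2 \/ m = 2 /\ n = 2) by nia.
    destruct Hmn as [E | [-> ->]].
    + assert (k = 2%nat) by lia. subst k. exact (no_nullhomotopic_tour_lift_2 m n w Ht Hwk).
    + assert (k = 4%nat) by lia. subst k. exact (no_nullhomotopic_tour_lift_2x2 w Ht Hwk).
Qed.

(** * Hamiltonian cycles of cylinders *)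

Definition translate (t : pt) (L : list pt) : list pt := map (fun p => pt_add p t) L.

Lemma knight_adj_translate t p q : knight_adj p q -> knight_adj (pt_add p t) (pt_add q t).
Proof.
  unfold knight_adj, pt_add; cbn.
  replace (fst p + fst t - (fst q + fst t)) with (fst p - fst q) by lia.
  replace (snd p + snd t - (snd q + snd t)) with (snd p - snd q) by lia. trivial.
Qed.

Lemma pt_add_shift p s t : pt_add (pt_add p (s, 0)) (t, 0) = pt_add p (s + t, 0).
Proof. unfold pt_add; cbn. f_equal; lia. Qed.

Lemma hd_translate t L : L <> [] -> hd (0, 0) (translate t L) = pt_add (hd (0, 0) L) t.
Proof. apply (hd_map_ne (fun p => pt_add p t)). Qed.

Lemma last_translate t L : L <> [] -> last (translate t L) (0, 0) = pt_add (last L (0, 0)) t.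
Proof. apply (last_map_ne (fun p => pt_add p t)). Qed.

Lemma knight_walk_translate t L : knight_walk L -> knight_walk (translate t L).
Proof. apply knight_walk_map, knight_adj_translate. Qed.

(* A knight walk that closes up after a horizontal translation by [D]: a cycle winding once
   around the cylinder with horizontal period [D]. *)
Definition helical_walk (D : Z) (L : list pt) : Prop :=
  L <> [] /\ knight_walk L /\ knight_adj (last L (0, 0)) (pt_add (hd (0, 0) L) (D, 0)).

Lemma helical_walk_translate D t L : helical_walk D L -> helical_walk D (translate t L).
Proof.
  intros [HL [HW Hcl]]. split; [apply map_ne, HL |]. split; [apply knight_walk_translate, HW |].
  rewrite last_translate, hd_translate by exact HL.
  replace (pt_add (pt_add (hd (0, 0) L) t) (D, 0)) with (pt_add (pt_add (hd (0, 0) L) (D, 0)) t)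
    by (unfold pt_add; cbn; f_equal; lia).
  apply knight_adj_translate, Hcl.
Qed.

Fixpoint helix (slots : list pt) (s : Z) (k : nat) : list pt :=
  match k with
  | O => []
  | S k' => slots ++ translate (s, 0) (helix slots s k')
  end.

Lemma helix_ne slots s k : slots <> [] -> helix slots s (S k) <> [].
Proof. intros H E. apply app_eq_nil in E. tauto. Qed.

Lemma helix_last slots s k : slots <> [] ->
  last (helix slots s (S k)) (0, 0) = pt_add (last slots (0, 0)) (Z.of_nat k * s, 0).
Proof.
  intros H. induction k as [| k IH].
  - cbn [helix translate map]. rewrite app_nil_r.
    destruct (last slots (0, 0)); unfold pt_add; cbn; f_equal; lia.
  - change (helix slots s (S (S k))) with (slots ++ translate (s, 0) (helix slots s (S k))).
    rewrite last_app_ne, last_translate, IH, pt_add_shift by (try apply map_ne; apply helix_ne, H).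
    f_equal. f_equal. lia.
Qed.

Lemma helix_helical slots s k : helical_walk s slots ->
  helical_walk (Z.of_nat (S k) * s) (helix slots s (S k)).
Proof.
  intros [Hne [HW Hcl]].
  assert (Hhd : forall k, hd (0, 0) (helix slots s (S k)) = hd (0, 0) slots)
    by (intro; apply hd_app_ne, Hne).
  split; [apply helix_ne, Hne |]. split.
  - induction k as [| k IH]; [cbn; rewrite app_nil_r; exact HW |].
    change (helix slots s (S (S k))) with (slots ++ translate (s, 0) (helix slots s (S k))).
    apply knight_walk_app; [exact Hne | apply map_ne, helix_ne, Hne |].
    rewrite hd_translate, Hhd by (apply helix_ne, Hne).
    split; [exact HW |]. split; [apply knight_walk_translate, IH | exact Hcl].
  - rewrite helix_last, Hhd by exact Hne.
    replace (pt_add (hd (0, 0) slots) (Z.of_nat (S k) * s, 0))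
      with (pt_add (pt_add (hd (0, 0) slots) (s, 0)) (Z.of_nat k * s, 0))
      by (rewrite pt_add_shift; f_equal; f_equal; lia).
    apply knight_adj_translate, Hcl.
Qed.

Lemma in_helix slots s k q j : In q slots -> (j < k)%nat ->
  In (pt_add q (Z.of_nat j * s, 0)) (helix slots s k).
Proof.
  revert j. induction k as [| k IH]; intros j Hq Hj; [lia |]. apply in_or_app.
  destruct j as [| j].
  - left. replace (pt_add q (Z.of_nat 0 * s, 0)) with q; [exact Hq |].
    destruct q; unfold pt_add; cbn; f_equal; lia.
  - right. replace (pt_add q (Z.of_nat (S j) * s, 0))
      with (pt_add (pt_add q (Z.of_nat j * s, 0)) (s, 0))
      by (rewrite pt_add_shift; f_equal; f_equal; lia).
    apply (in_map (fun p => pt_add p (s, 0))), IH; [exact Hq | lia].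
Qed.

Lemma helix_length slots s k : length (helix slots s k) = (k * length slots)%nat.
Proof.
  induction k as [| k IH]; [reflexivity |].
  cbn [helix]. unfold translate. rewrite length_app, length_map, IH. lia.
Qed.

(* Two helices winding the same way are joined by exchanging the edges at two adjacent
   places; running the second one backwards cancels the windings, so the result closes up
   in the plane. *)
Definition splice (D : Z) (X1 Y1 X2 Y2 : list pt) : list pt :=
  Y1 ++ translate (D, 0) X1 ++ translate (D, 0) (rev X2) ++ rev Y2.

Lemma splice_cycle D X1 Y1 X2 Y2 :
  helical_walk D (X1 ++ Y1) -> helical_walk D (X2 ++ Y2) ->
  X1 <> [] -> Y1 <> [] -> X2 <> [] -> Y2 <> [] ->
  knight_adj (last X1 (0, 0)) (last X2 (0, 0)) -> knight_adj (hd (0, 0) Y1) (hd (0, 0) Y2) ->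
  knight_cycle (splice D X1 Y1 X2 Y2).
Proof.
  intros [_ [HW1 Hcl1]] [_ [HW2 Hcl2]] HX1 HY1 HX2 HY2 Hlast Hhd.
  rewrite last_app_ne, hd_app_ne in Hcl1, Hcl2 by assumption.
  apply knight_walk_app in HW1 as [HX1w [HY1w _]], HW2 as [HX2w [HY2w _]]; try assumption.
  assert (HrX2 := rev_ne X2 HX2). assert (HrY2 := rev_ne Y2 HY2).
  assert (HtX1 : translate (D, 0) X1 <> []) by (apply map_ne, HX1).
  assert (HtX2 : translate (D, 0) (rev X2) <> []) by (apply map_ne, HrX2).
  unfold splice. split; [apply app_ne_r, app_ne_r, app_ne_r, HrY2 |].
  rewrite hd_app_ne, !last_app_ne, last_rev_ne by (repeat apply app_ne_r; assumption).
  split; [| apply knight_adj_sym, Hhd].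
  apply knight_walk_app; [assumption | repeat apply app_ne_r; assumption |].
  rewrite hd_app_ne, hd_translate by assumption.
  split; [assumption |]. split; [| exact Hcl1].
  apply knight_walk_app; [assumption | apply app_ne_r; assumption |].
  rewrite hd_app_ne, hd_translate, last_translate, hd_rev_ne by assumption.
  split; [apply knight_walk_translate; assumption |]. split; [| apply knight_adj_translate, Hlast].
  apply knight_walk_app; [assumption .. |].
  rewrite last_translate, last_rev_ne, hd_rev_ne by assumption.
  split; [apply knight_walk_translate, knight_walk_rev; assumption |].
  split; [apply knight_walk_rev; assumption | apply knight_adj_sym, Hcl2].
Qed.

Lemma in_splice D X1 Y1 X2 Y2 p : In p ((X1 ++ Y1) ++ (X2 ++ Y2)) ->
  In p (splice D X1 Y1 X2 Y2) \/ In (pt_add p (D, 0)) (splice D X1 Y1 X2 Y2).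
Proof.
  unfold splice, translate. rewrite !in_app_iff, !in_map_iff.
  intros [[H | H] | [H | H]].
  - right. right. left. exists p. auto.
  - left. left. exact H.
  - right. right. right. left. exists p. split; [reflexivity | rewrite <- in_rev; exact H].
  - left. right. right. right. rewrite <- in_rev. exact H.
Qed.

Lemma splice_length D X1 Y1 X2 Y2 :
  length (splice D X1 Y1 X2 Y2) = length ((X1 ++ Y1) ++ (X2 ++ Y2)).
Proof. unfold splice, translate. rewrite !length_app, !length_map, !length_rev. lia. Qed.

Definition covers_cylinder (lo hi P : Z) (L : list pt) : Prop :=
  forall r rho, lo <= r < hi -> exists p, In p L /\ snd p = r /\ (P | fst p - rho).

(* A knight cycle in the plane that projects to a Hamiltonian cycle of the cylinder
   [Z/P] x [0, W): it meets all [W * P] cells and has [W * P] vertices. *)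
Definition cylinder_tour (W P : Z) : Prop :=
  exists L, knight_cycle L /\ covers_cylinder 0 W P L /\ Z.of_nat (length L) = W * P.

Lemma covers_cylinder_app lo mid hi P L1 L2 :
  covers_cylinder lo mid P L1 -> covers_cylinder mid hi P L2 -> covers_cylinder lo hi P (L1 ++ L2).
Proof.
  intros H1 H2 r rho Hr.
  destruct (Z_lt_le_dec r mid) as [Hm | Hm];
    [destruct (H1 r rho ltac:(lia)) as [p Hp] | destruct (H2 r rho ltac:(lia)) as [p Hp]];
    exists p; rewrite in_app_iff; tauto.
Qed.

Lemma covers_cylinder_translate lo hi lo' hi' P L t : covers_cylinder lo hi P L ->
  lo' = lo + snd t -> hi' = hi + snd t -> covers_cylinder lo' hi' P (translate t L).
Proof.
  intros H -> -> r rho Hr. destruct (H (r - snd t) (rho - fst t) ltac:(lia)) as [p [Hp [Er Hd]]].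
  exists (pt_add p t). split; [apply (in_map (fun q => pt_add q t)), Hp |].
  unfold pt_add; cbn. split; [lia |]. replace (fst p + fst t - rho) with (fst p - (rho - fst t))
    by lia. exact Hd.
Qed.

Lemma covers_cylinder_helix slots s k lo hi P :
  (forall r rho, lo <= r < hi -> exists q j, In q slots /\ snd q = r /\ (j < k)%nat /\
     (P | fst q + Z.of_nat j * s - rho)) ->
  covers_cylinder lo hi P (helix slots s k).
Proof.
  intros H r rho Hr. destruct (H r rho Hr) as [q [j [Hq [Er [Hj Hd]]]]].
  exists (pt_add q (Z.of_nat j * s, 0)). split; [apply in_helix; assumption |].
  unfold pt_add; cbn. split; [lia | exact Hd].
Qed.

Lemma covers_cylinder_splice lo hi P D X1 Y1 X2 Y2 : (P | D) ->
  covers_cylinder lo hi P ((X1 ++ Y1) ++ (X2 ++ Y2)) ->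
  covers_cylinder lo hi P (splice D X1 Y1 X2 Y2).
Proof.
  intros [d ->] H r rho Hr. destruct (H r rho Hr) as [p [Hp [Er [t Et]]]].
  destruct (in_splice (d * P) X1 Y1 X2 Y2 p Hp) as [Hs | Hs].
  - exists p. split; [exact Hs |]. split; [exact Er |]. exists t. exact Et.
  - exists (pt_add p (d * P, 0)). split; [exact Hs |].
    unfold pt_add; cbn. split; [lia |]. exists (t + d). lia.
Qed.

Lemma cylinder_tour_of_splice W P D L1 L2 X1 Y1 X2 Y2 : (P | D) ->
  L1 = X1 ++ Y1 -> L2 = X2 ++ Y2 -> helical_walk D L1 -> helical_walk D L2 ->
  X1 <> [] -> Y1 <> [] -> X2 <> [] -> Y2 <> [] ->
  knight_adj (last X1 (0, 0)) (last X2 (0, 0)) -> knight_adj (hd (0, 0) Y1) (hd (0, 0) Y2) ->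
  covers_cylinder 0 W P (L1 ++ L2) -> Z.of_nat (length L1 + length L2) = W * P ->
  cylinder_tour W P.
Proof.
  intros HD -> -> H1 H2 HX1 HY1 HX2 HY2 Hlast Hhd Hcov Hlen.
  exists (splice D X1 Y1 X2 Y2). split; [apply splice_cycle; assumption |].
  split; [apply covers_cylinder_splice; assumption |].
  rewrite splice_length, length_app. exact Hlen.
Qed.

Lemma residue_step1 P a rho : 0 < P ->
  exists j, (j < Z.to_nat P)%nat /\ (P | a + Z.of_nat j * 1 - rho).
Proof.
  intros HP. exists (Z.to_nat ((rho - a) mod P)).
  pose proof (Z.mod_pos_bound (rho - a) P HP). pose proof (Z.div_mod (rho - a) P ltac:(lia)).
  split; [lia |]. exists (- ((rho - a) / P)). lia.
Qed.

(* [2] is invertible modulo [2p+1], with inverse [p+1]. *)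
Lemma residue_step2_odd p a rho :
  exists j, (j < S (2 * p))%nat /\ (2 * Z.of_nat p + 1 | a + Z.of_nat j * 2 - rho).
Proof.
  set (P := 2 * Z.of_nat p + 1). set (z := (rho - a) * (Z.of_nat p + 1)).
  pose proof (Z.mod_pos_bound z P ltac:(lia)). pose proof (Z.div_mod z P ltac:(lia)).
  exists (Z.to_nat (z mod P)). split; [lia |].
  exists (rho - a - 2 * (z / P)). rewrite Z2Nat.id by lia. subst z P. nia.
Qed.

Lemma residue_step2_even p a rho : Z.even (rho - a) = true ->
  exists j, (j < S p)%nat /\ (2 * Z.of_nat p + 2 | a + Z.of_nat j * 2 - rho).
Proof.
  intros He. apply Z.even_spec in He as [u Eu].
  pose proof (Z.mod_pos_bound u (Z.of_nat p + 1) ltac:(lia)).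
  pose proof (Z.div_mod u (Z.of_nat p + 1) ltac:(lia)).
  exists (Z.to_nat (u mod (Z.of_nat p + 1))). split; [lia |].
  exists (- (u / (Z.of_nat p + 1))). rewrite Z2Nat.id by lia. lia.
Qed.

(* After (0,0): up the odd rows 1, 3, ..., 2h+1, then row 2h+2, then down the even rows
   2h, ..., 2; one vertex in each row. *)
Definition stair_rest (h : nat) : list pt :=
  map (fun i => (Z.of_nat i + 2, 2 * Z.of_nat i + 1)) (seq 0 (S h)) ++
  (Z.of_nat h, 2 * Z.of_nat h + 2) ::
  map (fun i => (Z.of_nat h - Z.of_nat i + 1, 2 * Z.of_nat h - 2 * Z.of_nat i)) (seq 0 h).

Definition stair (h : nat) : list pt := (0, 0) :: stair_rest h.

Lemma stair_helical h : helical_walk 1 (stair h).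
Proof.
  assert (Hup : knight_walk (map (fun i => (Z.of_nat i + 2, 2 * Z.of_nat i + 1)) (seq 0 (S h))))
    by (apply knight_walk_map_seq; intro i; solve_knight_adj).
  assert (Hdown : knight_walk ((Z.of_nat h, 2 * Z.of_nat h + 2) ::
    map (fun i => (Z.of_nat h - Z.of_nat i + 1, 2 * Z.of_nat h - 2 * Z.of_nat i)) (seq 0 h))).
  { destruct h as [| h]; [exact I |]. split; [solve_knight_adj |].
    apply knight_walk_map_seq. intro i. solve_knight_adj. }
  split; [discriminate |]. split.
  - split; [solve_knight_adj |].
    apply knight_walk_app; [discriminate .. |]. rewrite last_map_seq.
    split; [exact Hup |]. split; [exact Hdown | solve_knight_adj].
  - unfold stair, stair_rest. rewrite last_cons_ne, last_app_ne by discriminate.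
    destruct h as [| h]; [solve_knight_adj |].
    rewrite last_cons_ne, last_map_seq by discriminate. solve_knight_adj.
Qed.

Lemma stair_length h : length (stair h) = (2 * h + 3)%nat.
Proof.
  unfold stair, stair_rest. cbn [length]. rewrite length_app. cbn [length].
  rewrite !length_map, !length_seq. lia.
Qed.

Lemma stair_rows h r : 0 <= r < 2 * Z.of_nat h + 3 -> exists q, In q (stair h) /\ snd q = r.
Proof.
  intros Hr. unfold stair, stair_rest.
  pose proof (Z.div_mod r 2 ltac:(lia)). pose proof (Z.mod_pos_bound r 2 ltac:(lia)).
  destruct (Z.eq_dec r 0) as [-> | Hr0]; [exists (0, 0); cbn; auto |].
  destruct (Z.eq_dec r (2 * Z.of_nat h + 2)) as [Et | Et].
  { exists (Z.of_nat h, 2 * Z.of_nat h + 2). split; [right; apply in_or_app; right; left |]; auto. }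
  destruct (Z.eq_dec (r mod 2) 1) as [Eo | Eo].
  - exists (Z.of_nat (Z.to_nat (r / 2)) + 2, 2 * Z.of_nat (Z.to_nat (r / 2)) + 1).
    split; [| cbn [snd]; lia]. right. apply in_or_app. left.
    apply (in_map (fun i => (Z.of_nat i + 2, 2 * Z.of_nat i + 1))), in_seq. lia.
  - set (i := Z.to_nat (Z.of_nat h - r / 2)).
    exists (Z.of_nat h - Z.of_nat i + 1, 2 * Z.of_nat h - 2 * Z.of_nat i).
    split; [| cbn [snd]; lia]. right. apply in_or_app. right. right.
    apply (in_map (fun i => (Z.of_nat h - Z.of_nat i + 1, 2 * Z.of_nat h - 2 * Z.of_nat i))).
    apply in_seq. lia.
Qed.

Lemma covers_cylinder_helix1 slots lo hi P : 0 < P ->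
  (forall r, lo <= r < hi -> exists q, In q slots /\ snd q = r) ->
  covers_cylinder lo hi P (helix slots 1 (Z.to_nat P)).
Proof.
  intros HP Hrows. apply covers_cylinder_helix. intros r rho Hr.
  destruct (Hrows r Hr) as [q [Hq Eq]].
  destruct (residue_step1 P (fst q) rho HP) as [j [Hj Hd]]. exists q, j. auto.
Qed.

Lemma helical_walk_of_bool D L : L <> [] -> knight_walkb L = true ->
  knight_adjb (last L (0, 0)) (pt_add (hd (0, 0) L) (D, 0)) = true -> helical_walk D L.
Proof.
  intros HL HW Hcl. split; [exact HL |].
  split; [apply knight_walkb_spec, HW | apply knight_adjb_spec, Hcl].
Qed.

Definition three_rows : list pt := [(0, 0); (-2, 1); (0, 2)].

Lemma cylinder_tour_even h P : 1 <= P -> cylinder_tour (2 * Z.of_nat h + 6) P.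
Proof.
  intros HP. destruct (Z.to_nat P) as [| k] eqn:Ek; [lia |].
  apply (cylinder_tour_of_splice _ P (Z.of_nat (S k) * 1)
    (helix three_rows 1 (S k)) (translate (-1, 3) (helix (stair h) 1 (S k)))
    [(0, 0); (-2, 1)] ((0, 2) :: translate (1, 0) (helix three_rows 1 k))
    [(-1, 3)] (translate (-1, 3) (stair_rest h ++ translate (1, 0) (helix (stair h) 1 k))));
    try reflexivity; try discriminate.
  - exists 1. lia.
  - apply helix_helical, helical_walk_of_bool; [discriminate | reflexivity ..].
  - apply helical_walk_translate, helix_helical, stair_helical.
  - apply knight_adjb_spec. reflexivity.
  - apply knight_adjb_spec. reflexivity.
  - rewrite <- Ek. apply (covers_cylinder_app 0 3).
    + apply covers_cylinder_helix1; [lia |]. intros r Hr.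
      assert (r = 0 \/ r = 1 \/ r = 2) as [-> | [-> | ->]] by lia;
        [exists (0, 0) | exists (-2, 1) | exists (0, 2)]; cbn; auto.
    + apply (covers_cylinder_translate 0 (2 * Z.of_nat h + 3)); [| cbn; lia ..].
      apply covers_cylinder_helix1; [lia | apply stair_rows].
  - unfold translate. rewrite length_map, !helix_length, stair_length. cbn [length three_rows]. lia.
Qed.

Lemma cylinder_tour_four p : cylinder_tour 4 (2 * Z.of_nat p + 1).
Proof.
  set (A := [(0, 0); (1, 2)] : list pt). set (B := [(2, 1); (3, 3)] : list pt).
  apply (cylinder_tour_of_splice _ _ (Z.of_nat (S (2 * p)) * 2)
    (helix A 2 (S (2 * p))) (helix B 2 (S (2 * p)))
    [(0, 0)] ((1, 2) :: translate (2, 0) (helix A 2 (2 * p)))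
    [(2, 1)] ((3, 3) :: translate (2, 0) (helix B 2 (2 * p))));
    try reflexivity; try discriminate.
  - exists 2. lia.
  - apply helix_helical, helical_walk_of_bool; [discriminate | reflexivity ..].
  - apply helix_helical, helical_walk_of_bool; [discriminate | reflexivity ..].
  - apply knight_adjb_spec. reflexivity.
  - apply knight_adjb_spec. reflexivity.
  - intros r rho Hr.
    assert (Hslot : exists q, In q (A ++ B) /\ snd q = r).
    { assert (r = 0 \/ r = 1 \/ r = 2 \/ r = 3) as [-> | [-> | [-> | ->]]] by lia;
        [exists (0, 0) | exists (2, 1) | exists (1, 2) | exists (3, 3)]; cbn; auto 6. }
    destruct Hslot as [q [Hq Eq]]. destruct (residue_step2_odd p (fst q) rho) as [j [Hj Hd]].
    exists (pt_add q (Z.of_nat j * 2, 0)). rewrite in_app_iff in Hq |- *.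
    split; [destruct Hq; [left | right]; apply in_helix; assumption |].
    unfold pt_add; cbn. split; [lia | exact Hd].
  - rewrite !helix_length. cbn [length A B]. lia.
Qed.

(* Six rows, each met twice at columns of opposite parity. *)
Definition six_rows_bottom : list pt := [(0, 0); (1, 2); (2, 4); (0, 5); (1, 3); (-1, 4)].
Definition six_rows_top : list pt := [(1, 5); (2, 3); (1, 1); (-1, 0); (-2, 2); (0, 1)].
Definition six_rows : list pt := six_rows_bottom ++ six_rows_top.

Lemma six_rows_pairs r : 0 <= r < 6 ->
  exists a1 a2, In (a1, r) six_rows /\ In (a2, r) six_rows /\ Z.odd (a2 - a1) = true.
Proof.
  intros Hr. assert (r = 0 \/ r = 1 \/ r = 2 \/ r = 3 \/ r = 4 \/ r = 5)
    as [-> | [-> | [-> | [-> | [-> | ->]]]]] by lia;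
    [exists 0, (-1) | exists 1, 0 | exists 1, (-2) | exists 1, 2 | exists 2, (-1) | exists 0, 1];
    cbn; repeat split; tauto.
Qed.

Lemma covers_cylinder_six_rows p :
  covers_cylinder 0 6 (2 * Z.of_nat p + 2) (helix six_rows 2 (S p)).
Proof.
  apply covers_cylinder_helix. intros r rho Hr.
  destruct (six_rows_pairs r Hr) as [a1 [a2 [Ha1 [Ha2 Hodd]]]].
  destruct (Z.even (rho - a1)) eqn:He.
  - destruct (residue_step2_even p a1 rho He) as [j [Hj Hd]]. exists (a1, r), j. auto.
  - assert (He2 : Z.even (rho - a2) = true).
    { replace (rho - a2) with (rho - a1 + - (a2 - a1)) by lia.
      rewrite Z.even_add, Z.even_opp, He, <- Z.negb_odd, Hodd. reflexivity. }
    destruct (residue_step2_even p a2 rho He2) as [j [Hj Hd]]. exists (a2, r), j. auto.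
Qed.

Lemma cylinder_tour_odd h p : cylinder_tour (2 * Z.of_nat h + 9) (2 * Z.of_nat p + 2).
Proof.
  apply (cylinder_tour_of_splice _ _ (Z.of_nat (S p) * 2)
    (helix six_rows 2 (S p)) (translate (0, 6) (helix (stair h) 1 (S (2 * p + 1))))
    six_rows_bottom (six_rows_top ++ translate (2, 0) (helix six_rows 2 p))
    [(0, 6)] (translate (0, 6) (stair_rest h ++ translate (1, 0) (helix (stair h) 1 (2 * p + 1)))));
    try reflexivity; try discriminate.
  - exists 1. lia.
  - apply helix_helical, helical_walk_of_bool; [discriminate | reflexivity ..].
  - replace (Z.of_nat (S p) * 2) with (Z.of_nat (S (2 * p + 1)) * 1) by lia.
    apply helical_walk_translate, helix_helical, stair_helical.
  - apply knight_adjb_spec. reflexivity.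
  - apply knight_adjb_spec. reflexivity.
  - apply (covers_cylinder_app 0 6); [apply covers_cylinder_six_rows |].
    apply (covers_cylinder_translate 0 (2 * Z.of_nat h + 3)); [| cbn; lia ..].
    replace (S (2 * p + 1)) with (Z.to_nat (2 * Z.of_nat p + 2)) by lia.
    apply covers_cylinder_helix1; [lia | apply stair_rows].
  - unfold translate. rewrite length_map, !helix_length, stair_length.
    cbn [length six_rows six_rows_bottom six_rows_top app]. lia.
Qed.

(** * From cylinders to the Klein bottle *)

Lemma covers_cylinder_incl lo hi P L L' :
  incl L L' -> covers_cylinder lo hi P L -> covers_cylinder lo hi P L'.
Proof.
  intros Hincl H r rho Hr. destruct (H r rho Hr) as [p [Hp Hq]]. exists p. auto.
Qed.

Lemma cylinder_tour_at_origin W P : 0 < W -> cylinder_tour W P ->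
  exists L, knight_cycle L /\ hd (0, 0) L = (0, 0) /\ covers_cylinder 0 W P L /\
    Z.of_nat (length L) = W * P.
Proof.
  intros HW [L [HL [Hcov Hlen]]].
  destruct (Hcov 0 0 ltac:(lia)) as [p0 [Hp0 [E0 _]]].
  apply in_split in Hp0 as [U [V ->]].
  exists (translate (- fst p0, 0) ((p0 :: V) ++ U)). split; [| split; [| split]].
  - apply knight_cycle_map; [apply knight_adj_translate |].
    apply knight_cycle_rotate; [exact HL | discriminate].
  - destruct p0 as [a b]. cbn in E0 |- *. unfold pt_add; cbn. f_equal; lia.
  - apply (covers_cylinder_translate 0 W); [| cbn; lia ..].
    apply (covers_cylinder_incl _ _ _ (U ++ p0 :: V)); [| exact Hcov].
    intros q. rewrite !in_app_iff. cbn. tauto.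
  - unfold translate. rewrite length_map, !length_app in *. cbn in *. lia.
Qed.

Lemma tour_of_cylinder_rows m n : 0 < m -> 0 < n -> 3 <= m * n ->
  cylinder_tour n m -> has_nullhomotopic_tour m n.
Proof.
  intros Hm Hn H3 Hcyl.
  destruct (cylinder_tour_at_origin n m Hn Hcyl) as [L [HL [Hhd [Hcov Hlen]]]].
  apply (tour_of_knight_cycle m n L); try assumption; [lia |].
  intros [x y] Hxy. apply in_board in Hxy as [Hx Hy].
  destruct (Hcov y x Hy) as [q [Hq [Eq [t Et]]]].
  apply in_map_iff. exists q. split; [| exact Hq].
  apply (canon_of_glide m n t 0); [assumption .. |].
  destruct q as [a b]. unfold glide; cbn in *. f_equal; lia.
Qed.

Definition swap (p : pt) : pt := (snd p, fst p).

Lemma knight_adj_swap p q : knight_adj p q -> knight_adj (swap p) (swap q).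
Proof. unfold knight_adj, swap; cbn. lia. Qed.

(* The board [2M] x [n] of the Klein bottle is the cylinder [Z/2n] x [0, M): the glide
   sigma sends column [x] at height [y] to column [2M-1-x] at height [y+n]. *)
Lemma tour_of_cylinder_columns M n : 0 < M -> 0 < n -> 3 <= 2 * M * n ->
  cylinder_tour M (2 * n) -> has_nullhomotopic_tour (2 * M) n.
Proof.
  intros HM Hn H3 Hcyl.
  destruct (cylinder_tour_at_origin M (2 * n) HM Hcyl) as [L [HL [Hhd [Hcov Hlen]]]].
  apply (tour_of_knight_cycle _ n (map swap L)); [lia | assumption | lia | | | |].
  - apply knight_cycle_map; [apply knight_adj_swap | exact HL].
  - destruct L as [| q L]; [exfalso; apply (proj1 HL); reflexivity |]. cbn in *. now rewrite Hhd.
  - rewrite length_map. lia.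
  - intros [x y] Hxy. apply in_board in Hxy as [Hx Hy]. rewrite map_map.
    destruct (Z_lt_le_dec x M) as [HxM | HxM].
    + destruct (Hcov x y ltac:(lia)) as [q [Hq [Eq [t Et]]]].
      apply in_map_iff. exists q. split; [| exact Hq].
      apply (canon_of_glide _ n 0 (2 * t)); [lia | lia |].
      rewrite glide_even. destruct q as [a b]. unfold swap; cbn [fst snd] in *. f_equal; lia.
    + destruct (Hcov (2 * M - 1 - x) (y + n) ltac:(lia)) as [q [Hq [Eq [t Et]]]].
      apply in_map_iff. exists q. split; [| exact Hq].
      apply (canon_of_glide _ n 0 (2 * t + 1)); [lia | lia |].
      rewrite glide_odd. destruct q as [a b]. unfold swap; cbn [fst snd] in *. f_equal; lia.
Qed.

(** * Sufficiency *)

(* For odd [m >= 5]: up the diagonal from (0,0) to (m-3, 2m-6), a turn of four vertices,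
   and down the parallel diagonal from (m-1, 2m-7) to (2,-1), next to (0,0). *)
Definition two_row_walk (q : nat) : list pt :=
  let m := 2 * Z.of_nat q + 5 in
  map (fun i => (Z.of_nat i, 2 * Z.of_nat i)) (seq 0 (2 * q + 3)) ++
  [(m - 1, 2 * m - 5); (m - 2, 2 * m - 3); (m, 2 * m - 4); (m + 1, 2 * m - 6)] ++
  map (fun k => (m - 1 - Z.of_nat k, 2 * m - 7 - 2 * Z.of_nat k)) (seq 0 (2 * q + 3)).

Lemma two_row_walk_cycle q : knight_cycle (two_row_walk q).
Proof.
  unfold two_row_walk. set (m := 2 * Z.of_nat q + 5).
  assert (Hm : m = 2 * Z.of_nat q + 5) by reflexivity. clearbody m.
  replace (2 * q + 3)%nat with (S (2 * q + 2)) by lia.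
  split; [discriminate |]. split.
  - apply knight_walk_app; [discriminate .. |].
    split; [apply knight_walk_map_seq; solve_knight_adj |]. rewrite last_map_seq. split.
    + apply knight_walk_app; [discriminate .. |].
      split; [cbn [knight_walk]; repeat split; solve_knight_adj |].
      split; [apply knight_walk_map_seq; solve_knight_adj | solve_knight_adj].
    + cbn [hd app]. solve_knight_adj.
  - rewrite !last_app_ne, last_map_seq by discriminate. cbn [hd app map seq]. solve_knight_adj.
Qed.

Lemma in_two_row_walk_up q i : 0 <= i <= 2 * Z.of_nat q + 2 -> In (i, 2 * i) (two_row_walk q).
Proof.
  intros Hi. apply in_or_app. left. apply in_map_iff. exists (Z.to_nat i).
  split; [f_equal; lia | apply in_seq; lia].
Qed.

Lemma in_two_row_walk_down q k : 0 <= k <= 2 * Z.of_nat q + 2 ->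
  let m := 2 * Z.of_nat q + 5 in In (m - 1 - k, 2 * m - 7 - 2 * k) (two_row_walk q).
Proof.
  intros Hk m. apply in_or_app. right. apply in_or_app. right. apply in_map_iff.
  exists (Z.to_nat k). split; [f_equal; lia | apply in_seq; lia].
Qed.

Lemma in_two_row_walk_turn q p : let m := 2 * Z.of_nat q + 5 in
  In p [(m - 1, 2 * m - 5); (m - 2, 2 * m - 3); (m, 2 * m - 4); (m + 1, 2 * m - 6)] ->
  In p (two_row_walk q).
Proof. intros m Hp. apply in_or_app. right. apply in_or_app. left. exact Hp. Qed.

Lemma two_row_walk_covers_row0 q x : 0 <= x < 2 * Z.of_nat q + 5 ->
  exists p, canon (2 * Z.of_nat q + 5) 2 p = (x, 0) /\ In p (two_row_walk q).
Proof.
  intros Hx. pose proof (in_two_row_walk_turn q) as Hturn. set (m := 2 * Z.of_nat q + 5) in *.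
  pose proof (Z.div_mod x 2 ltac:(lia)). pose proof (Z.mod_pos_bound x 2 ltac:(lia)).
  set (u := x / 2) in *.
  destruct (Z.eq_dec x 1); [| destruct (Z.eq_dec x (m - 1)); [| destruct (Z.eq_dec (x mod 2) 0)]].
  - exists (m + 1, 2 * m - 6). split; [| apply Hturn; cbn; tauto].
    apply (canon_of_glide _ _ 1 (2 * (Z.of_nat q + 1))); [lia .. |].
    rewrite glide_even. cbn [fst snd]. f_equal; lia.
  - exists (m, 2 * m - 4). split; [| apply Hturn; cbn; tauto].
    apply (canon_of_glide _ _ 1 (2 * (Z.of_nat q + 1) + 1)); [lia .. |].
    rewrite glide_odd. cbn [fst snd]. f_equal; lia.
  - exists (x, 2 * x). split; [| apply in_two_row_walk_up; lia].
    apply (canon_of_glide _ _ 0 (2 * u)); [lia .. |].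
    rewrite glide_even. cbn [fst snd]. f_equal; lia.
  - exists (m - 1 - x, 2 * (m - 1 - x)). split; [| apply in_two_row_walk_up; lia].
    apply (canon_of_glide _ _ 0 (2 * (Z.of_nat q + 1 - u) + 1)); [lia .. |].
    rewrite glide_odd. cbn [fst snd]. f_equal; lia.
Qed.

Lemma two_row_walk_covers_row1 q x : 0 <= x < 2 * Z.of_nat q + 5 ->
  exists p, canon (2 * Z.of_nat q + 5) 2 p = (x, 1) /\ In p (two_row_walk q).
Proof.
  intros Hx. pose proof (in_two_row_walk_turn q) as Hturn.
  pose proof (in_two_row_walk_down q) as Hdown. set (m := 2 * Z.of_nat q + 5) in *.
  pose proof (Z.div_mod x 2 ltac:(lia)). pose proof (Z.mod_pos_bound x 2 ltac:(lia)).
  set (u := x / 2) in *.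
  destruct (Z.eq_dec x 1); [| destruct (Z.eq_dec x (m - 1)); [| destruct (Z.eq_dec (x mod 2) 0)]].
  - exists (m - 2, 2 * m - 3). split; [| apply Hturn; cbn; tauto].
    apply (canon_of_glide _ _ 0 (2 * (Z.of_nat q + 1) + 1)); [lia .. |].
    rewrite glide_odd. cbn [fst snd]. f_equal; lia.
  - exists (m - 1, 2 * m - 5). split; [| apply Hturn; cbn; tauto].
    apply (canon_of_glide _ _ 0 (2 * (Z.of_nat q + 1))); [lia .. |].
    rewrite glide_even. cbn [fst snd]. f_equal; lia.
  - exists (m - 1 - x, 2 * m - 7 - 2 * x). split; [| apply Hdown; lia].
    apply (canon_of_glide _ _ 0 (2 * (Z.of_nat q - u) + 1)); [lia .. |].
    rewrite glide_odd. cbn [fst snd]. f_equal; lia.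
  - exists (m - 1 - (m - 1 - x), 2 * m - 7 - 2 * (m - 1 - x)). split; [| apply Hdown; lia].
    apply (canon_of_glide _ _ 0 (2 * (u - 1))); [lia .. |].
    rewrite glide_even. cbn [fst snd]. f_equal; lia.
Qed.

Lemma two_row_walk_covers q :
  incl (board (2 * Z.of_nat q + 5) 2) (map (canon (2 * Z.of_nat q + 5) 2) (two_row_walk q)).
Proof.
  intros [x y] Hxy. apply in_board in Hxy as [Hx Hy]. apply in_map_iff.
  assert (y = 0 \/ y = 1) as [-> | ->] by lia;
    [apply two_row_walk_covers_row0 | apply two_row_walk_covers_row1]; exact Hx.
Qed.

Lemma tour_two_rows q : has_nullhomotopic_tour (2 * Z.of_nat q + 5) 2.
Proof.
  apply (tour_of_knight_cycle _ 2 (two_row_walk q)); [lia .. | apply two_row_walk_cycle | | |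
    apply two_row_walk_covers].
  - unfold two_row_walk. replace (2 * q + 3)%nat with (S (2 * q + 2)) by lia. reflexivity.
  - unfold two_row_walk. rewrite !length_app, !length_map, !length_seq. cbn [length]. lia.
Qed.

Definition tour_checkb (m n : Z) (L : list pt) : bool :=
  (3 <=? m * n) && pt_eqb (hd (0, 0) L) (0, 0) && knight_walkb L &&
  knight_adjb (last L (0, 0)) (0, 0) && (Z.of_nat (length L) =? m * n) &&
  forallb (fun c => existsb (fun p => pt_eqb (canon m n p) c) L) (board m n).

Lemma tour_checkb_spec m n L : 0 < m -> 0 < n -> tour_checkb m n L = true ->
  has_nullhomotopic_tour m n.
Proof.
  intros Hm Hn H. unfold tour_checkb in H. rewrite !andb_true_iff in H.
  destruct H as [[[[[H3 Hhd] HW] Hcl] Hlen] Hcov].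
  apply Z.leb_le in H3. apply pt_eqb_eq in Hhd. apply Z.eqb_eq in Hlen.
  assert (HL : L <> []) by (intros ->; cbn in Hlen; lia).
  apply (tour_of_knight_cycle m n L); try assumption.
  - split; [exact HL |]. split; [apply knight_walkb_spec, HW |].
    rewrite Hhd. apply knight_adjb_spec, Hcl.
  - intros c Hc. rewrite forallb_forall in Hcov.
    apply Hcov, existsb_exists in Hc as [p [Hp E]]. apply pt_eqb_eq in E.
    rewrite <- E. apply in_map, Hp.
Qed.

(* Lifts of tours of the boards that the constructions above do not reach. *)
Definition small_tours : list (Z * Z * list pt) := [
  (2, 3, [(0,0); (-2,1); (0,2); (-1,0); (0,-2); (2,-1)]);
  (2, 4, [(0,0); (-2,1); (-1,3); (1,2); (3,1); (1,0); (3,-1); (1,-2)]);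
  (2, 5, [(0,0); (-2,1); (-1,-1); (-2,-3); (0,-2); (2,-1); (3,-3); (2,-5); (0,-4); (-1,-2)]);
  (2, 7, [(0,0); (-2,1); (-1,-1); (-3,-2); (-2,-4); (-4,-3); (-3,-5); (-4,-7); (-6,-6); (-8,-5); (-7,-3); (-5,-4); (-4,-2); (-2,-1)]);
  (4, 1, [(0,0); (-2,1); (-3,3); (-1,2)]);
  (4, 2, [(0,0); (1,-2); (-1,-1); (-2,1); (-4,2); (-3,0); (-1,1); (-2,-1)]);
  (4, 3, [(0,0); (-2,1); (0,2); (-2,3); (-4,4); (-6,5); (-7,7); (-9,6); (-7,5); (-5,4); (-3,3); (-1,2)]);
  (4, 4, [(0,0); (-2,1); (-4,2); (-2,3); (0,4); (2,5); (4,6); (6,7); (7,5); (9,4); (11,3); (9,2); (7,1); (5,0); (3,-1); (1,-2)]);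
  (4, 5, [(0,0); (-2,1); (-4,2); (-2,3); (0,4); (2,5); (0,6); (2,7); (4,8); (2,9); (1,11); (-1,12); (-2,10); (-4,9); (-3,7); (-4,5); (-3,3); (-4,1); (-3,-1); (-1,-2)]);
  (4, 7, [(0,0); (-2,1); (-4,2); (-2,3); (-4,4); (-3,6); (-1,5); (1,4); (-1,3); (-2,5); (0,6); (2,7); (4,8); (6,9); (5,7); (3,6); (1,5); (-1,4); (1,3); (-1,2); (-2,4); (-4,3); (-3,1); (-5,0); (-6,2); (-4,1); (-3,-1); (-1,-2)]);
  (6, 1, [(0,0); (-2,1); (-3,3); (-4,1); (-2,0); (-1,2)]);
  (6, 2, [(0,0); (1,-2); (3,-1); (4,-3); (2,-4); (0,-3); (-2,-2); (-3,-4); (-1,-3); (-2,-1); (0,-2); (2,-1)]);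
  (6, 3, [(0,0); (-2,1); (-3,-1); (-4,1); (-3,3); (-2,5); (-3,7); (-5,6); (-7,5); (-6,7); (-5,9); (-4,11); (-6,10); (-4,9); (-2,8); (-1,6); (-2,4); (-1,2)]);
  (6, 4, [(0,0); (-2,1); (0,2); (2,1); (3,-1); (1,-2); (0,-4); (-2,-5); (-3,-7); (-4,-9); (-2,-10); (-3,-12); (-5,-13); (-6,-11); (-8,-12); (-6,-13); (-7,-11); (-6,-9); (-5,-7); (-3,-6); (-4,-4); (-3,-2); (-2,0); (-1,2)]);
  (6, 5, [(0,0); (-2,1); (-1,-1); (-2,-3); (-3,-5); (-2,-7); (-4,-6); (-2,-5); (-3,-3); (-1,-4); (0,-2); (-2,-1); (-4,-2); (-6,-3); (-4,-4); (-3,-6); (-5,-7); (-6,-5); (-7,-3); (-9,-4); (-8,-6); (-10,-7); (-8,-8); (-7,-6); (-5,-5); (-4,-3); (-6,-4); (-4,-5); (-2,-4); (-1,-2)]);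
  (6, 7, [(0,0); (-2,1); (-1,-1); (1,-2); (0,-4); (-1,-6); (-3,-7); (-2,-5); (-4,-4); (-2,-3); (-3,-1); (-4,1); (-6,2); (-7,4); (-8,6); (-6,5); (-5,3); (-4,5); (-5,7); (-6,9); (-7,11); (-6,13); (-5,11); (-4,9); (-3,11); (-4,13); (-5,15); (-4,17); (-3,19); (-2,17); (-3,15); (-1,14); (-2,16); (-3,14); (-2,12); (-4,11); (-3,9); (-2,7); (-1,5); (0,3); (-1,1); (-2,-1)]);
  (8, 1, [(0,0); (-2,1); (-3,3); (-1,2); (1,1); (3,0); (4,2); (2,1)]);
  (8, 2, [(0,0); (1,-2); (3,-1); (5,-2); (7,-3); (6,-1); (4,0); (2,1); (4,2); (6,1); (7,-1); (5,0); (3,1); (1,0); (0,-2); (2,-1)]);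
  (8, 3, [(0,0); (-2,1); (0,2); (-1,4); (-3,3); (-2,5); (0,4); (1,6); (2,8); (4,7); (6,8); (8,9); (10,10); (12,9); (11,11); (10,9); (11,7); (10,5); (9,7); (8,5); (6,6); (4,5); (3,3); (2,1)]);
  (8, 4, [(0,0); (-2,1); (0,2); (2,1); (4,0); (2,-1); (0,-2); (-2,-1); (-4,-2); (-6,-3); (-7,-1); (-5,-2); (-4,-4); (-6,-5); (-7,-7); (-9,-8); (-10,-10); (-12,-11); (-13,-13); (-11,-12); (-9,-13); (-8,-11); (-6,-10); (-7,-8); (-5,-9); (-3,-8); (-1,-9); (0,-7); (2,-6); (1,-4); (3,-3); (1,-2)]);
  (8, 5, [(0,0); (-2,1); (-1,-1); (-2,-3); (-3,-1); (-1,-2); (0,-4); (1,-2); (2,0); (4,1); (6,0); (8,1); (7,3); (9,4); (10,2); (9,0); (8,2); (7,4); (5,3); (7,2); (9,3); (11,4); (10,6); (12,7); (14,6); (12,5); (11,3); (10,1); (9,-1); (7,0); (6,2); (4,3); (3,1); (5,0); (4,2); (2,3); (4,4); (5,2); (4,0); (2,-1)]);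
  (8, 7, [(0,0); (1,2); (3,1); (2,-1); (1,-3); (3,-4); (4,-2); (6,-1); (5,-3); (7,-2); (8,-4); (10,-5); (11,-7); (12,-9); (11,-11); (10,-13); (9,-15); (10,-17); (8,-16); (6,-17); (5,-15); (6,-13); (8,-12); (7,-14); (5,-13); (3,-14); (4,-12); (2,-11); (1,-13); (3,-12); (4,-10); (6,-11); (7,-13); (8,-11); (6,-12); (5,-14); (6,-16); (4,-15); (2,-14); (0,-15); (-1,-17); (0,-19); (1,-21); (2,-23); (0,-22); (-1,-20); (-2,-18); (0,-17); (2,-16); (1,-14); (2,-12); (3,-10); (4,-8); (3,-6); (2,-4); (1,-2)]);
  (10, 1, [(0,0); (-2,1); (-3,3); (-1,2); (1,1); (3,0); (4,2); (5,0); (3,-1); (2,1)]);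
  (10, 2, [(0,0); (1,-2); (2,-4); (3,-6); (1,-5); (0,-3); (2,-2); (0,-1); (-2,-2); (-1,-4); (1,-3); (2,-1); (4,0); (6,-1); (5,1); (3,0); (5,-1); (6,1); (4,2); (2,1)]);
  (10, 3, [(0,0); (1,2); (-1,1); (-3,2); (-4,0); (-2,1); (-1,-1); (1,0); (3,1); (4,-1); (2,-2); (0,-3); (2,-4); (4,-3); (3,-1); (5,-2); (7,-3); (9,-4); (11,-5); (12,-3); (14,-2); (13,-4); (11,-3); (9,-2); (8,-4); (6,-3); (5,-1); (3,-2); (4,0); (2,1)]);
  (10, 4, [(0,0); (-1,2); (-3,3); (-2,1); (0,2); (2,1); (1,3); (3,4); (4,2); (5,4); (4,6); (2,5); (3,3); (1,4); (3,5); (2,3); (0,4); (-2,5); (-4,4); (-2,3); (-1,5); (-3,6); (-1,7); (1,6); (3,7); (1,8); (3,9); (5,8); (6,6); (4,5); (5,3); (4,1); (5,-1); (3,-2); (2,-4); (0,-3); (2,-2); (0,-1); (2,0); (1,2)]);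
  (10, 5, [(0,0); (-2,1); (-1,-1); (-2,-3); (-3,-1); (-1,-2); (0,-4); (1,-2); (2,0); (0,-1); (-1,-3); (-2,-5); (-3,-7); (-1,-8); (1,-9); (2,-7); (1,-5); (-1,-4); (0,-2); (-2,-1); (-3,-3); (-4,-5); (-2,-6); (0,-5); (1,-7); (2,-9); (3,-11); (2,-13); (3,-15); (4,-17); (3,-19); (5,-18); (7,-19); (6,-21); (5,-19); (4,-21); (5,-23); (3,-22); (4,-20); (3,-18); (4,-16); (3,-14); (4,-12); (5,-10); (6,-8); (4,-9); (3,-7); (2,-5); (1,-3); (2,-1)]);
  (10, 7, [(0,0); (1,2); (3,1); (2,-1); (1,-3); (-1,-2); (0,-4); (2,-5); (3,-3); (1,-2); (2,0); (4,-1); (6,0); (5,2); (3,3); (4,5); (5,7); (6,5); (4,4); (2,5); (1,7); (3,6); (2,4); (3,2); (5,3); (4,1); (5,-1); (6,1); (7,3); (8,1); (7,-1); (8,-3); (9,-1); (10,1); (11,3); (9,2); (10,4); (9,6); (8,8); (7,10); (8,12); (6,11); (7,9); (9,10); (10,8); (11,6); (13,5); (12,7); (14,8); (15,10); (13,9); (14,11); (13,13); (11,14); (10,12); (11,10); (12,12); (10,11); (9,9); (10,7); (8,6); (7,4); (8,2); (6,3); (7,1); (5,0); (4,-2); (3,0); (4,2); (2,1)]);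
  (14, 1, [(0,0); (-2,1); (-3,3); (-1,2); (1,1); (3,0); (4,2); (5,4); (7,5); (6,7); (5,5); (4,3); (3,1); (2,-1)]);
  (14, 2, [(0,0); (1,2); (2,0); (0,1); (1,-1); (3,-2); (4,0); (2,1); (3,3); (4,5); (5,3); (6,1); (8,0); (7,2); (9,1); (10,-1); (8,-2); (7,-4); (5,-3); (6,-5); (4,-6); (3,-4); (2,-6); (1,-4); (-1,-3); (-2,-1); (0,-2); (2,-1)]);
  (14, 3, [(0,0); (1,2); (-1,1); (-3,2); (-4,0); (-2,1); (-1,-1); (1,0); (3,1); (2,3); (3,5); (2,7); (4,6); (5,4); (4,2); (5,0); (6,2); (4,3); (2,2); (4,1); (6,0); (5,2); (7,1); (9,2); (11,1); (13,0); (12,2); (13,4); (11,3); (10,1); (12,0); (10,-1); (9,1); (7,2); (5,3); (7,4); (8,2); (6,3); (5,1); (3,0); (1,1); (-1,2)]);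
  (14, 4, [(0,0); (-1,2); (-3,3); (-2,1); (0,2); (2,1); (1,3); (3,4); (4,2); (2,3); (0,4); (-2,5); (-4,6); (-5,4); (-7,5); (-6,7); (-5,9); (-4,11); (-3,9); (-2,11); (-4,10); (-5,8); (-6,10); (-8,11); (-9,13); (-7,12); (-5,13); (-4,15); (-6,14); (-8,13); (-9,15); (-11,16); (-10,14); (-8,15); (-6,16); (-7,14); (-6,12); (-7,10); (-8,12); (-6,13); (-5,15); (-4,17); (-5,19); (-4,21); (-2,20); (-3,18); (-2,16); (-3,14); (-1,13); (-3,12); (-2,10); (-3,8); (-1,7); (0,5); (-1,3); (1,2)]);
  (14, 5, [(0,0); (1,2); (3,1); (2,-1); (0,-2); (1,-4); (3,-3); (1,-2); (-1,-1); (1,0); (-1,1); (-2,-1); (-1,-3); (-3,-2); (-4,0); (-3,2); (-4,4); (-3,6); (-4,8); (-3,10); (-5,11); (-6,9); (-5,7); (-6,5); (-5,3); (-6,1); (-5,-1); (-6,-3); (-8,-2); (-7,0); (-8,2); (-6,3); (-8,4); (-10,3); (-12,4); (-10,5); (-8,6); (-10,7); (-12,6); (-14,5); (-13,7); (-11,6); (-12,8); (-10,9); (-8,10); (-10,11); (-12,12); (-14,13); (-16,14); (-15,16); (-17,15); (-18,13); (-20,12); (-22,11); (-20,10); (-21,8); (-23,9); (-22,7); (-20,6); (-18,5); (-16,6); (-15,4); (-13,3); (-11,2); (-10,0); (-8,-1); (-6,-2); (-4,-1); (-2,0); (-1,2)]);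
  (14, 7, [(0,0); (1,-2); (0,-4); (1,-6); (0,-8); (1,-10); (0,-12); (1,-14); (0,-16); (1,-18); (0,-20); (1,-22); (0,-24); (1,-26); (3,-25); (5,-24); (6,-22); (5,-20); (6,-18); (5,-16); (6,-14); (5,-12); (6,-10); (4,-9); (3,-7); (2,-9); (1,-7); (0,-5); (2,-6); (0,-7); (2,-8); (0,-9); (2,-10); (0,-11); (1,-9); (3,-8); (5,-7); (6,-5); (4,-4); (6,-3); (5,-5); (6,-7); (4,-8); (3,-6); (1,-5); (2,-7); (3,-5); (2,-3); (3,-1); (4,-3); (2,-4); (0,-3); (2,-2); (0,-1); (1,1); (2,3); (3,5); (4,7); (5,5); (6,3); (4,4); (6,5); (5,3); (3,4); (1,3); (0,1); (1,-1); (2,1); (4,2); (6,1); (5,-1); (4,1); (6,2); (5,0); (6,-2); (5,-4); (6,-6); (5,-8); (4,-6); (2,-5); (1,-3); (3,-4); (4,-2); (3,0); (2,2); (4,3); (3,1); (4,-1); (5,1); (3,2); (2,0); (3,-2); (4,0); (6,-1); (5,-3); (4,-5); (3,-3); (2,-1)]);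
  (3, 2, [(0,0); (1,-2); (-1,-1); (-2,1); (0,2); (2,1)])
].

Definition small_boardb (m n : Z) : bool :=
  existsb (fun '(a, b, L) => if (a =? m) && (b =? n) then tour_checkb m n L else false)
    small_tours.

Lemma small_board_tour m n : 0 < m -> 0 < n -> small_boardb m n = true ->
  has_nullhomotopic_tour m n.
Proof.
  intros Hm Hn Hb. apply existsb_exists in Hb as [[[a b] L] [_ Hab]].
  destruct ((a =? m) && (b =? n)); [| discriminate].
  exact (tour_checkb_spec m n L Hm Hn Hab).
Qed.

Lemma nullhomotopic_tour_1x1 : has_nullhomotopic_tour 1 1.
Proof.
  exists 0%nat, (fun _ => (0, 0)). split; [| reflexivity].
  split; [reflexivity |]. split; [apply same_vertex_refl |].
  split; [intros; lia |]. split; [intros; lia |]. split; [intros; lia |].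
  intros p. exists 0%nat. split; [lia |]. apply same_vertex_iff_canon; [lia | lia |].
  unfold canon; cbn. rewrite !Z.mod_1_r. destruct (Z.even _); reflexivity.
Qed.

Lemma tour_of_cylinder_columns_large M n : 6 <= M -> M <> 7 -> 0 < n ->
  has_nullhomotopic_tour (2 * M) n.
Proof.
  intros HM HM7 Hn. apply tour_of_cylinder_columns; [lia | lia | nia |].
  destruct (Z.Even_or_Odd M) as [[a ->] | [a ->]].
  - replace (2 * a) with (2 * Z.of_nat (Z.to_nat (a - 3)) + 6) by lia.
    apply cylinder_tour_even. lia.
  - replace (2 * a + 1) with (2 * Z.of_nat (Z.to_nat (a - 4)) + 9) by lia.
    replace (2 * n) with (2 * Z.of_nat (Z.to_nat (n - 1)) + 2) by lia.
    apply cylinder_tour_odd.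
Qed.

Lemma tour_even_width a n : 1 <= a -> 1 <= n <= 7 -> n <> 6 -> (2 <= a \/ 3 <= n) ->
  has_nullhomotopic_tour (2 * a) n.
Proof.
  intros Ha Hn Hn6 Hsmall.
  destruct (Z_le_gt_dec 6 a) as [Ha6 | Ha6]; [destruct (Z.eq_dec a 7) as [Ha7 | Ha7] |].
  2: apply tour_of_cylinder_columns_large; lia.
  all: apply small_board_tour; [lia | lia |].
  all: assert (a = 1 \/ a = 2 \/ a = 3 \/ a = 4 \/ a = 5 \/ a = 7)
    as [-> | [-> | [-> | [-> | [-> | ->]]]]] by lia.
  all: assert (n = 1 \/ n = 2 \/ n = 3 \/ n = 4 \/ n = 5 \/ n = 7)
    as [-> | [-> | [-> | [-> | [-> | ->]]]]] by lia.
  all: solve [lia | vm_compute; reflexivity].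
Qed.

Theorem nullhomotopic_tour_sufficient m n : 0 < m -> 0 < n ->
  ~ ( (Z.odd m = true /\ Z.odd n = true /\ (1 < m \/ 1 < n)) \/
      (m <= 2 /\ n <= 2 /\ (1 < m \/ 1 < n)) ) ->
  has_nullhomotopic_tour m n.
Proof.
  intros Hm Hn Hex.
  assert (Hrows : forall b, 3 <= b -> has_nullhomotopic_tour m (2 * b)).
  { intros b Hb. apply tour_of_cylinder_rows; [lia | lia | nia |].
    replace (2 * b) with (2 * Z.of_nat (Z.to_nat (b - 3)) + 6) by lia.
    apply cylinder_tour_even. lia. }
  destruct (Z.Even_or_Odd m) as [[a ->] | [a ->]], (Z.Even_or_Odd n) as [[b ->] | [b ->]].
  - destruct (Z_le_gt_dec 3 b); [apply Hrows; lia |].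
    apply tour_even_width; [lia | lia | lia |]. destruct (Z.eq_dec a 1); [| lia].
    destruct (Z.eq_dec b 1); [| lia]. exfalso. apply Hex. right. lia.
  - destruct (Z_le_gt_dec 4 b).
    + apply tour_of_cylinder_rows; [lia | lia | nia |].
      replace (2 * b + 1) with (2 * Z.of_nat (Z.to_nat (b - 4)) + 9) by lia.
      replace (2 * a) with (2 * Z.of_nat (Z.to_nat (a - 1)) + 2) by lia.
      apply cylinder_tour_odd.
    + apply tour_even_width; [lia | lia | lia |]. destruct (Z.eq_dec a 1); [| lia].
      destruct (Z.eq_dec b 0); [| lia]. exfalso. apply Hex. right. lia.
  - destruct (Z_le_gt_dec 3 b); [apply Hrows; lia |].
    destruct (Z.eq_dec b 2) as [-> |].
    + apply tour_of_cylinder_rows; [lia | lia | nia |].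
      replace (2 * a + 1) with (2 * Z.of_nat (Z.to_nat a) + 1) by lia. apply cylinder_tour_four.
    + replace b with 1 by lia. destruct (Z_le_gt_dec 2 a).
      * replace (2 * a + 1) with (2 * Z.of_nat (Z.to_nat (a - 2)) + 5) by lia. apply tour_two_rows.
      * destruct (Z.eq_dec a 1) as [-> |].
        -- apply small_board_tour; [lia | lia | vm_compute; reflexivity].
        -- exfalso. apply Hex. right. lia.
  - assert ((a = 0 /\ b = 0) \/ (1 < 2 * a + 1 \/ 1 < 2 * b + 1)) as [[-> ->] | Hbig] by lia.
    + exact nullhomotopic_tour_1x1.
    + exfalso. apply Hex. left. rewrite !Z.odd_odd. auto.
Qed.

Theorem theorem6p1 (m n : Z) (hm : 0 < m) (hn : 0 < n) :
  has_nullhomotopic_tour m n <->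
  ~ ( (Z.odd m = true /\ Z.odd n = true /\ (1 < m \/ 1 < n)) \/
      (m <= 2 /\ n <= 2 /\ (1 < m \/ 1 < n)) ).
Proof.
  split; [apply nullhomotopic_tour_necessary | apply nullhomotopic_tour_sufficient]; assumption.
Qed.
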